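(* For every composition $I$ of $n\ge1$, the number of (type A) permutation tableaux of the shape encoded by $I$ is \[ \mathrm{PT}^A_I=\sum_{J\succeq I}(-1)^{\ell(I)-\ell(J)}\,\mathrm{Fact}(J), \] where the sum is over compositions $J$ of $n$ coarser than or equal to $I$ and $\mathrm{Fact}(j_1,\dots,j_p)=p^{j_1}(p-1)^{j_2}\cdots2^{j_{p-1}}1^{j_p}$.
   Context: A composition of $n$ is a sequence $I=(i_1,\dots,i_r)$ of positive integers with sum $n$; $\ell(I)=r$; $\mathrm{Des}(I)=\{i_1,i_1+i_2,\dots,i_1+\dots+i_{r-1}\}$; $J\succeq I$ ($J$ coarser than $I$) means $\mathrm{Des}(J)\subseteq\mathrm{Des}(I)$. Let $k\ge1$ and let $\lambda$ be a Young diagram with exactly $k$ rows (rows of length $0$ allowed) and exactly $n-k$ nonempty columns, drawn in French convention (rows left-justified, longest row at the bottom). Encode $\lambda$ by the composition $I=(i_1,\dots,i_k)$ of $n$ where, for $1\le t\le k$, $i_t-1$ is the number of columns of length $k-t+1$ (a bijection onto compositions of $n$ with $k$ parts). A (type A) permutation tableau of shape $\lambda$ is a filling of the boxes of $\lambda$ with $0$'s and $1$'s such that (1) every column contains at least one $1$, and (2) no box containing a $0$ has both a $1$ below it in the same column and a $1$ to its left in the same row. *)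

From mathcomp Require Import all_boot all_order all_algebra.
Set Implicit Arguments. Unset Strict Implicit. Unset Printing Implicit Defensive.
Import GRing.Theory Num.Theory.

Definition is_composition (n : nat) (J : seq nat) : bool :=
  all (fun j => 0 < j) J && (sumn J == n).

(* All sequences of length <= len with entries in {1,...,bound}, each listed once.
   Every composition of n occurs (exactly once) in [bseqs n n]. *)
Fixpoint bseqs (len bound : nat) : seq (seq nat) :=
  match len with
  | 0 => [:: [::]]
  | l.+1 => [::] :: [seq i :: s | i <- iota 1 bound, s <- bseqs l bound]
  end.

Definition Des (J : seq nat) : seq nat :=
  [seq sumn (take t J) | t <- iota 1 (size J).-1].

Definition coarser (J I : seq nat) : bool := all (fun d => d \in Des I) (Des J).

Definition Fact (J : seq nat) : nat :=
  \prod_(t < size J) (size J - t) ^ nth 0 J t.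

(* Column lengths of the Young diagram encoded by I = (i_1,...,i_k), left to right:
   (i_1 - 1) columns of length k, (i_2 - 1) of length k-1, ..., (i_k - 1) of length 1. *)
Definition colLens (I : seq nat) : seq nat :=
  flatten [seq nseq (nth 0 I t - 1) (size I - t) | t <- iota 0 (size I)].

(* A filling of the k x m rectangle (row 0 = bottom row, French convention;
   column 0 = leftmost column); box (r,c) belongs to the diagram iff r < cl_c.
   f is a permutation tableau of the shape iff
   (0) f vanishes outside the diagram (so f is just a filling of the boxes),
   (1) every column contains a 1,
   (2) no box containing 0 has both a 1 below it in its column and a 1 to its
       left in its row. *)
Definition is_PT (cl : seq nat) (k m : nat) (f : {ffun 'I_k * 'I_m -> bool}) : bool :=
  [&& [forall r : 'I_k, forall c : 'I_m, (nth 0 cl c <= r) ==> ~~ f (r, c)],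
      [forall c : 'I_m, exists r : 'I_k, (r < nth 0 cl c) && f (r, c)]
    & [forall r : 'I_k, forall c : 'I_m,
         ((r < nth 0 cl c) && ~~ f (r, c)) ==>
         ~~ ([exists r' : 'I_k, (r' < r) && f (r', c)] &&
             [exists c' : 'I_m, (c' < c) && f (r, c')])]].

Definition PT (I : seq nat) : nat :=
  #|[pred f : {ffun 'I_(size I) * 'I_(size (colLens I)) -> bool} |
       is_PT (colLens I) f]|.

From mathcomp Require Import all_boot all_order all_algebra zify ring.
Import GRing.Theory Num.Theory.
Set Implicit Arguments. Unset Strict Implicit. Unset Printing Implicit Defensive.

(* Both sides satisfy the same recursion in the first parts of I, with the same
   initial values.  For the tableaux, let A be the last column of maximal height.  If
   the top row contains a 1 then so does its cell in column A; deleting the empty top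
   row, or column A when that cell is its only 1, or else just that cell, gives
   PT (A+2, j+1, r) = PT (A+j+2, r) + PT (A+1, j+1, r) + PT (A+1, j+2, r).
   For the alternating sum, with T_i g (p) = (p+1)^i g (p+1) - p^i g (p), the sum over
   the coarsenings J of I = (i_1, ..., i_k) of (-1)^(l(I)-l(J)) Fact(J) g(l(J)) is
   (T_(i_k) ... T_(i_1) g)(0), and these operators satisfy the same recursion. *)

Definition nPT k m (cl : seq nat) :=
  #|[pred f : {ffun 'I_k * 'I_m -> bool} | is_PT cl f]|.

Definition PT_spec k m (cl : seq nat) (f : {ffun 'I_k * 'I_m -> bool}) : Prop :=
 [/\ (forall (r : 'I_k) (c : 'I_m), nth 0 cl c <= r -> f (r, c) = false),
     (forall c : 'I_m, exists2 r : 'I_k, r < nth 0 cl c & f (r, c)) &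
     (forall (r : 'I_k) (c : 'I_m), r < nth 0 cl c -> f (r, c) = false ->
        forall r' : 'I_k, r' < r -> f (r', c) ->
        forall c' : 'I_m, c' < c -> f (r, c') -> False)].

Lemma is_PTP k m cl (f : {ffun 'I_k * 'I_m -> bool}) :
  reflect (PT_spec cl f) (is_PT cl f).
Proof.
apply: (iffP and3P) => [[/forallP Hout /forallP Hcol /forallP Hhinge]|[Hout Hcol Hhinge]].
  split.
  - move=> r c Hr; move: (Hout r) => /forallP /(_ c) /implyP /(_ Hr).
    by case: (f (r, c)).
  - by move=> c; case/existsP: (Hcol c) => r /andP [Hr Hf]; exists r.
  - move=> r c Hr Hf r' Hr' Hf' c' Hc' Hf''.
    move: (Hhinge r) => /forallP /(_ c) /implyP; rewrite Hr Hf => /(_ isT) /negP.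
    by apply; apply/andP; split; apply/existsP; [exists r' | exists c']; apply/andP.
split.
- by apply/forallP => r; apply/forallP => c; apply/implyP => Hr; rewrite Hout.
- by apply/forallP => c; case: (Hcol c) => r Hr Hf; apply/existsP; exists r; apply/andP.
- apply/forallP => r; apply/forallP => c; apply/implyP => /andP [Hr /negbTE Hf].
  apply/negP => /andP [/existsP [r' /andP [Hr' Hf']] /existsP [c' /andP [Hc' Hf'']]].
  exact: (Hhinge r c Hr Hf r' Hr' Hf' c' Hc' Hf'').
Qed.

Lemma card_in_bij (T U : finType) (P : pred T) (Q : pred U) (f : T -> U) (g : U -> T) :
  (forall x, P x -> Q (f x)) -> (forall y, Q y -> P (g y)) ->
  (forall x, P x -> g (f x) = x) -> (forall y, Q y -> f (g y) = y) ->
  #|P| = #|Q|.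
Proof.
move=> PQ QP gf fg.
have f_inj : {in P &, injective f}.
  by move=> x y Px Py Exy; rewrite -(gf x Px) -(gf y Py) Exy.
rewrite -(card_in_imset f_inj); apply: eq_card => y.
apply/imsetP/idP => [[x Px ->]|Qy]; first exact: PQ.
by exists (g y); [exact: QP | rewrite fg].
Qed.

Lemma nPT_col0 k m cl (c : 'I_m) : nth 0 cl c = 0 -> nPT k m cl = 0.
Proof.
move=> Hc; apply: eq_card0 => f /=; apply/negP => /is_PTP [_ Hcol _].
by case: (Hcol c) => r; rewrite Hc.
Qed.

Lemma ltn_lift n (h : 'I_n) (i j : 'I_n.-1) : (lift h i < lift h j) = (i < j).
Proof. by rewrite !ltnNge leq_bump2. Qed.

Lemma ord_max_eq k (r : 'I_k.+1) : (r == ord_max) = (nat_of_ord r == k).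
Proof. by []. Qed.

Lemma ord_lt_max k (r : 'I_k.+1) : r != ord_max -> r < k.
Proof. by rewrite ord_max_eq => /eqP; have := ltn_ord r; lia. Qed.

Lemma ord_geq_max k (r : 'I_k.+1) : k <= r -> r = ord_max.
Proof. by move=> h; apply: val_inj => /=; have := ltn_ord r; lia. Qed.

Lemma nPT_drop_top_row k m cl :
  (forall c, nth 0 cl c <= k) -> nPT k.+1 m cl = nPT k m cl.
Proof.
move=> Hcl.
pose down (f : {ffun 'I_k.+1 * 'I_m -> bool}) : {ffun 'I_k * 'I_m -> bool} :=
  [ffun x => f (lift ord_max x.1, x.2)].
pose up (g : {ffun 'I_k * 'I_m -> bool}) : {ffun 'I_k.+1 * 'I_m -> bool} :=
  [ffun x => if unlift ord_max x.1 is Some r then g (r, x.2) else false].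
apply: (card_in_bij (f := down) (g := up)) => /=.
- move=> f /is_PTP [Hout Hcol Hhinge]; apply/is_PTP; split.
  + by move=> r c Hr; rewrite ffunE; apply: Hout; rewrite lift_max.
  + move=> c; case: (Hcol c) => r Hr Hf.
    case: (unliftP ord_max r) => [r' Er|Er].
      by exists r'; [rewrite -lift_max -Er | rewrite ffunE -Er].
    by move: (Hcl c); rewrite leqNgt (leq_trans _ Hr) // Er.
  + move=> r c Hr; rewrite !ffunE => Hf r' Hr'; rewrite ffunE => Hf' c' Hc'.
    rewrite ffunE => Hf''.
    by apply: (Hhinge _ _ _ Hf _ _ Hf' _ Hc' Hf''); rewrite ?lift_max.
- move=> g /is_PTP [Hout Hcol Hhinge]; apply/is_PTP; split.
  + move=> r c Hr; rewrite ffunE; case: (unliftP ord_max r) => [r' Er|//].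
    by apply: Hout; rewrite -(lift_max r') -Er.
  + move=> c; case: (Hcol c) => r Hr Hf; exists (lift ord_max r).
      by rewrite lift_max.
    by rewrite ffunE liftK.
  + move=> r c Hr; rewrite !ffunE => Hf r' Hr'; rewrite ffunE => Hf' c' Hc'.
    rewrite ffunE => Hf''.
    move: Hf Hf' Hf'' Hr Hr'.
    case: (unliftP ord_max r) => [s Es|//]; case: (unliftP ord_max r') => [s' Es'|//].
    move=> Hf Hf' Hf'' Hr Hr'.
    apply: (Hhinge s c _ Hf s' _ Hf' c' Hc' Hf''); first by rewrite -(lift_max s) -Es.
    by rewrite -(lift_max s) -(lift_max s') -Es -Es'.
- move=> f /is_PTP [Hout _ _]; apply/ffunP => -[r c]; rewrite ffunE /=.
  case: (unliftP ord_max r) => [r' ->|->]; first by rewrite ffunE.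
  by rewrite Hout //= Hcl.
- by move=> g _; apply/ffunP => -[r c]; rewrite !ffunE liftK.
Qed.

Lemma nth_minn k cl c : nth 0 (map (minn k) cl) c = minn k (nth 0 cl c).
Proof.
case: (ltnP c (size cl)) => h; first by rewrite (nth_map 0).
by rewrite !nth_default ?size_map //; lia.
Qed.

(* [map (minn k) cl] is the diagram [cl] with its top row cut off. *)
Lemma is_PT_top_row0 k m cl (f : {ffun 'I_k.+1 * 'I_m -> bool}) :
  is_PT cl f && [forall c, ~~ f (ord_max, c)] = is_PT (map (minn k) cl) f.
Proof.
apply/idP/idP.
- case/andP => /is_PTP [Hout Hcol Hhinge] /forallP Htop; apply/is_PTP; split.
  + move=> r c; rewrite nth_minn => Hr.
    case: (eqVneq r ord_max) => [->|/ord_lt_max Hrk]; first exact/negbTE/Htop.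
    by apply: Hout; lia.
  + move=> c; case: (Hcol c) => r Hr Hf; exists r => //; rewrite nth_minn.
    case: (eqVneq r ord_max) => [E|/ord_lt_max Hrk]; last by lia.
    by move: (Htop c); rewrite -E Hf.
  + move=> r c; rewrite nth_minn => Hr Hf r' Hr' Hf' c' Hc' Hf''.
    by apply: (Hhinge r c _ Hf r' Hr' Hf' c' Hc' Hf''); lia.
- move=> /is_PTP [Hout Hcol Hhinge]; apply/andP; split.
  + apply/is_PTP; split.
    * by move=> r c Hr; apply: Hout; rewrite nth_minn; lia.
    * by move=> c; case: (Hcol c) => r Hr Hf; exists r => //; move: Hr; rewrite nth_minn; lia.
    * move=> r c Hr Hf r' Hr' Hf' c' Hc' Hf''.
      case: (eqVneq r ord_max) => [E|/ord_lt_max Hrk].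
        by move: Hf''; rewrite E Hout // nth_minn /=; lia.
      by apply: (Hhinge r c _ Hf r' Hr' Hf' c' Hc' Hf''); rewrite nth_minn; lia.
  + by apply/forallP => c; apply/negbT; apply: Hout; rewrite nth_minn /=; lia.
Qed.

Section TopCorner.

Variables (k m : nat) (cl : seq nat) (A : 'I_m).
Hypothesis clA : nth 0 cl A = k.+1.
Hypothesis cl_right : forall c : 'I_m, A < c -> nth 0 cl c <= k.

(* If the top row contains a 1 then so does its corner cell (top, A): otherwise that
   cell would have the 1 of column A below it and a 1 of the top row to its left. *)
Lemma is_PT_top_corner (f : {ffun 'I_k.+1 * 'I_m -> bool}) :
  is_PT cl f -> forall c, f (ord_max, c) -> f (ord_max, A).
Proof.
move=> /is_PTP [Hout Hcol Hhinge] c Hf.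
case: (ltngtP A c) => [Ac|cA|/val_inj -> //].
  by rewrite Hout in Hf => //=; apply: cl_right.
apply/negPn/negP => /negbTE FA.
case: (Hcol A) => r Hr Hfr.
have r_low : r < (ord_max : 'I_k.+1).
  apply: ord_lt_max; apply: contraTneq Hfr => ->; by rewrite FA.
by apply: (Hhinge ord_max A _ FA r r_low Hfr c cA Hf); rewrite clA /=.
Qed.

Section ShortenCorner.

Variable cl' : seq nat.
Hypothesis cl'A : nth 0 cl' A = k.
Hypothesis cl'_other : forall c : 'I_m, c != A -> nth 0 cl' c = nth 0 cl c.

Let drop_corner (f : {ffun 'I_k.+1 * 'I_m -> bool}) : {ffun 'I_k.+1 * 'I_m -> bool} :=
  [ffun x => if x == (ord_max, A) then false else f x].
Let set_corner (g : {ffun 'I_k.+1 * 'I_m -> bool}) : {ffun 'I_k.+1 * 'I_m -> bool} :=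
  [ffun x => if x == (ord_max, A) then true else g x].

Let low_not_corner (r : 'I_k.+1) (c : 'I_m) : r < k -> ((r, c) == (ord_max, A)) = false.
Proof. by move=> h; apply/negbTE; rewrite xpair_eqE negb_and ord_max_eq; lia. Qed.

Let other_not_corner (r : 'I_k.+1) (c : 'I_m) : c != A -> ((r, c) == (ord_max, A)) = false.
Proof. by move=> h; apply/negbTE; rewrite xpair_eqE negb_and h orbT. Qed.

Let drop_corner_PT f : is_PT cl f -> (exists2 r : 'I_k.+1, r < k & f (r, A)) ->
  is_PT cl' (drop_corner f).
Proof.
move=> /is_PTP [Hout Hcol Hhinge] [r0 r0k Fr0]; apply/is_PTP; split.
- move=> r c Hr; rewrite ffunE; case: ifP => // E.
  case: (eqVneq c A) => [EcA|ncA].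
    by move: Hr E; rewrite EcA cl'A => /ord_geq_max ->; rewrite eqxx.
  by apply: Hout; rewrite -cl'_other.
- move=> c; case: (eqVneq c A) => [->|ncA].
    by exists r0; rewrite ?cl'A // ffunE low_not_corner.
  case: (Hcol c) => r Hr Hf; exists r; first by rewrite cl'_other.
  by rewrite ffunE other_not_corner.
- move=> r c Hr; rewrite !ffunE => Hf r' Hr'; rewrite ffunE => Hf' c' Hc'.
  rewrite ffunE => Hf''.
  have Hrc : r < nth 0 cl c.
    by case: (eqVneq c A) => [E|/cl'_other <- //]; move: Hr; rewrite E cl'A clA; lia.
  have rc : ((r, c) == (ord_max, A)) = false.
    case: (eqVneq c A) => [E|/other_not_corner -> //].
    by apply: low_not_corner; move: Hr; rewrite E cl'A.
  have r'c : ((r', c) == (ord_max, A)) = false.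
    by apply: low_not_corner; have := ltn_ord r; lia.
  rewrite rc in Hf; rewrite r'c in Hf'.
  move: Hf''; case: ifP => // _ Hf''.
  exact: (Hhinge r c Hrc Hf r' Hr' Hf' c' Hc' Hf'').
Qed.

Let set_corner_PT g : is_PT cl' g -> is_PT cl (set_corner g).
Proof.
move=> /is_PTP [Hout Hcol Hhinge]; apply/is_PTP; split.
- move=> r c Hr; rewrite ffunE; case: ifP => E.
    by move: E Hr => /eqP [-> ->]; rewrite clA /=; lia.
  case: (eqVneq c A) => [EcA|ncA].
    by move: Hr; rewrite EcA clA; have := ltn_ord r; lia.
  by apply: Hout; rewrite cl'_other.
- move=> c; case: (Hcol c) => r Hr Hf; exists r; last by rewrite ffunE Hf; case: ifP.
  by case: (eqVneq c A) => [E|/cl'_other <- //]; move: Hr; rewrite E cl'A clA; lia.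
- move=> r c Hr; rewrite !ffunE; case: ifP => // rc Hf r' Hr'.
  rewrite ffunE low_not_corner; last by have := ltn_ord r; lia.
  move=> Hf' c' Hc'; rewrite ffunE; case: ifP => [/eqP [Er Ec]|rc' Hf''].
    by move: Hr; rewrite Er /=; have := @cl_right c; rewrite -Ec => /(_ Hc'); lia.
  have Hrc : r < nth 0 cl' c.
    case: (eqVneq c A) => [E|/cl'_other -> //]; rewrite E cl'A.
    by apply: ord_lt_max; apply: contraFneq rc => ->; rewrite E.
  exact: (Hhinge r c Hrc Hf r' Hr' Hf' c' Hc' Hf'').
Qed.

Lemma card_PT_corner_not_alone :
  #|[pred f : {ffun 'I_k.+1 * 'I_m -> bool} | is_PT cl f && f (ord_max, A) &&
       [exists r : 'I_k.+1, (r < k) && f (r, A)]]| = nPT k.+1 m cl'.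
Proof.
apply: (card_in_bij (f := drop_corner) (g := set_corner)) => /=.
- move=> f /andP [/andP [PTf _] /existsP [r0 /andP [r0k Fr0]]].
  by apply: drop_corner_PT => //; exists r0.
- move=> g PTg; have /is_PTP [Hout Hcol _] := PTg.
  rewrite set_corner_PT //= ffunE eqxx /=.
  case: (Hcol A) => r Hr Hf; have rk : r < k by move: Hr; rewrite cl'A.
  by apply/existsP; exists r; rewrite rk /= ffunE low_not_corner.
- move=> f /andP [/andP [_ FA] _]; apply/ffunP => x; rewrite !ffunE.
  by case: ifP => [/eqP ->|->].
- move=> g /is_PTP [Hout _ _]; apply/ffunP => x; rewrite !ffunE.
  by case: ifP => [/eqP ->|-> //]; rewrite Hout // cl'A.
Qed.

End ShortenCorner.

Section RemoveCornerColumn.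

Variable cl' : seq nat.
Hypothesis cl'_lift : forall c : 'I_m.-1, nth 0 cl' c = nth 0 cl (lift A c).

Let drop_col (f : {ffun 'I_k.+1 * 'I_m -> bool}) : {ffun 'I_k.+1 * 'I_m.-1 -> bool} :=
  [ffun x => f (x.1, lift A x.2)].
Let insert_col (g : {ffun 'I_k.+1 * 'I_m.-1 -> bool}) : {ffun 'I_k.+1 * 'I_m -> bool} :=
  [ffun x => if unlift A x.2 is Some c then g (x.1, c) else x.1 == ord_max].

Let drop_col_PT f : is_PT cl f -> is_PT cl' (drop_col f).
Proof.
move=> /is_PTP [Hout Hcol Hhinge]; apply/is_PTP; split.
- by move=> r c Hr; rewrite ffunE /=; apply: Hout; rewrite -cl'_lift.
- move=> c; case: (Hcol (lift A c)) => r Hr Hf; exists r; first by rewrite cl'_lift.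
  by rewrite ffunE.
- move=> r c Hr; rewrite !ffunE => Hf r' Hr'; rewrite ffunE => Hf' c' Hc'.
  rewrite ffunE => Hf''.
  apply: (Hhinge r (lift A c) _ Hf r' Hr' Hf' (lift A c') _ Hf'').
    by rewrite -cl'_lift.
  by rewrite ltn_lift.
Qed.

Let insert_col_PT g : is_PT cl' g -> is_PT cl (insert_col g).
Proof.
move=> /is_PTP [Hout Hcol Hhinge]; apply/is_PTP; split.
- move=> r c Hr; rewrite ffunE /=.
  case: (unliftP A c) => [c' Ec|Ec]; first by apply: Hout; rewrite cl'_lift -Ec.
  by move: Hr; rewrite Ec clA; have := ltn_ord r; lia.
- move=> c; case: (unliftP A c) => [c' Ec|Ec].
    case: (Hcol c') => r Hr Hf; exists r; first by rewrite Ec -cl'_lift.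
    by rewrite ffunE Ec liftK.
  by exists ord_max; [rewrite Ec clA | rewrite ffunE Ec unlift_none].
- move=> r c Hr; rewrite !ffunE /=.
  case: (unliftP A c) => [d Ec|Ec]; last first.
    move=> _ r' Hr'; rewrite ffunE /= Ec unlift_none => /eqP Er'.
    by move: Hr'; rewrite Er' /=; have := ltn_ord r; lia.
  move=> Hf r' Hr'; rewrite ffunE /= Ec liftK => Hf' c' Hc'; rewrite ffunE /=.
  case: (unliftP A c') => [d' Ec'|Ec'].
    move=> Hf''; apply: (Hhinge r d _ Hf r' Hr' Hf' d' _ Hf''); first by rewrite cl'_lift -Ec.
    by rewrite -(ltn_lift A) -Ec'.
  move=> /eqP Er; rewrite Ec' in Hc'.
  by move: Hr (cl_right Hc'); rewrite Ec Er /=; lia.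
Qed.

Lemma card_PT_corner_alone :
  #|[pred f : {ffun 'I_k.+1 * 'I_m -> bool} | is_PT cl f && f (ord_max, A) &&
       [forall r : 'I_k.+1, (r < k) ==> ~~ f (r, A)]]| = nPT k.+1 m.-1 cl'.
Proof.
apply: (card_in_bij (f := drop_col) (g := insert_col)) => /=.
- by move=> f /andP [/andP [/drop_col_PT]].
- move=> g /insert_col_PT ->; rewrite ffunE unlift_none eqxx /=.
  apply/forallP => r; apply/implyP => rk; rewrite ffunE unlift_none ord_max_eq.
  by apply/negP => /eqP E; move: rk; rewrite E ltnn.
- move=> f /andP [/andP [_ FA] /forallP Hlow]; apply/ffunP => -[r c].
  rewrite ffunE /=; case: (unliftP A c) => [d ->|->]; first by rewrite ffunE.
  case: (eqVneq r ord_max) => [->|nr]; first by rewrite FA.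
  by apply/esym/negbTE; move: (Hlow r) => /implyP; apply; apply: ord_lt_max.
- by move=> g _; apply/ffunP => -[r c]; rewrite !ffunE /= liftK.
Qed.

End RemoveCornerColumn.

Lemma nPT_top_corner_rec (cl1 cl2 : seq nat) :
  nth 0 cl1 A = k -> (forall c : 'I_m, c != A -> nth 0 cl1 c = nth 0 cl c) ->
  (forall c : 'I_m.-1, nth 0 cl2 c = nth 0 cl (lift A c)) ->
  nPT k.+1 m cl = nPT k.+1 m (map (minn k) cl) + nPT k.+1 m.-1 cl2 + nPT k.+1 m cl1.
Proof.
move=> cl1A cl1_other cl2_lift.
rewrite -(card_PT_corner_alone cl2_lift) -(card_PT_corner_not_alone cl1A cl1_other).
rewrite /nPT -(cardID [pred f : {ffun 'I_k.+1 * 'I_m -> bool} |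
                         [forall c, ~~ f (ord_max, c)]]) -addnA.
congr (_ + _); first by apply: eq_card => f; rewrite !inE /= is_PT_top_row0.
rewrite -(cardID [pred f : {ffun 'I_k.+1 * 'I_m -> bool} |
                    [exists r : 'I_k.+1, (r < k) && f (r, A)]]) addnC.
have top_nonempty (f : {ffun 'I_k.+1 * 'I_m -> bool}) : is_PT cl f ->
    ~~ [forall c, ~~ f (ord_max, c)] = f (ord_max, A).
  move=> PTf; apply/forallPn/idP => [[c /negPn /(is_PT_top_corner PTf) //]|FA].
  by exists A; rewrite FA.
congr (_ + _); apply: eq_card => f; rewrite !inE /=;
  (case PTf: (is_PT cl f); last by rewrite !(andbF, andFb));
  rewrite (top_nonempty _ PTf) andbT //= andbC negb_exists.
by congr (_ && _); apply: eq_forallb => r; rewrite negb_and implybE.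
Qed.

End TopCorner.

Lemma nth_nseq_cat (a x : nat) (s : seq nat) c :
  nth 0 (nseq a x ++ s) c = if c < a then x else nth 0 s (c - a).
Proof. by rewrite nth_cat size_nseq nth_nseq; case: (c < a). Qed.

Lemma nPT_rec k m A cl : A < m.+1 -> (forall c, nth 0 cl c <= k) ->
  nPT k.+1 m.+1 (nseq A.+1 k.+1 ++ cl) =
    nPT k m.+1 (nseq A.+1 k ++ cl) + nPT k.+1 m (nseq A k.+1 ++ cl) +
    nPT k.+1 m.+1 (nseq A k.+1 ++ k :: cl).
Proof.
move=> HA Hcl; pose Ao : 'I_m.+1 := Ordinal HA.
rewrite (@nPT_top_corner_rec k m.+1 _ Ao _ _ (nseq A k.+1 ++ k :: cl) (nseq A k.+1 ++ cl));
  first last.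
- move=> c; rewrite !nth_nseq_cat /= /bump.
  case: (ltnP c A) => h; first by rewrite add0n ltnS ltnW.
  by rewrite add1n ltnS ltnNge h /= subSS.
- move=> c Hc; rewrite !nth_nseq_cat.
  case: (ltngtP c A) => h; first by rewrite ltnS ltnW.
    by rewrite ltnS leqNgt h /= (_ : c - A = (c - A.+1).+1) //; lia.
  by move: Hc; rewrite -(inj_eq val_inj) /= h eqxx.
- by rewrite nth_nseq_cat /= ltnn subnn.
- by move=> c Hc; rewrite nth_nseq_cat ltnNge (Hc : A < c) /= Hcl.
- by rewrite nth_nseq_cat /= ltnSn.
rewrite -[nPT k m.+1 _]nPT_drop_top_row; last by move=> c; rewrite nth_nseq_cat; case: ifP.
congr (nPT _ _ _ + _ + _); rewrite map_cat map_nseq (minn_idPl (leqnSn k)); congr (_ ++ _).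
apply: (@eq_from_nth _ 0); rewrite ?size_map // => i _.
by rewrite nth_minn; have := Hcl i; lia.
Qed.

Lemma colLens_cons i I : colLens (i :: I) = nseq (i - 1) (size I).+1 ++ colLens I.
Proof.
rewrite /colLens /=; congr (_ ++ _).
by rewrite -[1%N]addn0 iotaDl -map_comp; congr flatten; apply: eq_map.
Qed.

Lemma colLens_le I c : nth 0 (colLens I) c <= size I.
Proof.
elim: I c => [|i I IH] c; first by rewrite nth_nil.
rewrite colLens_cons nth_nseq_cat; case: (c < i - 1) => //=.
exact: leq_trans (IH _) (leqnSn _).
Qed.

Lemma PT1 : PT [:: 1%N] = 1.
Proof.
apply: (@eq_card1 _ [ffun => false]) => f; rewrite !inE.
apply/idP/eqP => [_|_]; first by apply/ffunP => -[r []].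
by apply/is_PTP; split => [r []|[]|r []].
Qed.

Lemma PT_cons1 I : PT (1%N :: I) = PT I.
Proof.
by rewrite /PT colLens_cons subnn -/(nPT _ _ _) nPT_drop_top_row //; apply: colLens_le.
Qed.

Lemma PT_single A : PT [:: A.+2] = PT [:: A.+1].
Proof.
rewrite /PT !colLens_cons /= !subn1 /= !cats0 size_nseq -!/(nPT _ _ _).
have := @nPT_rec 0 A A [::] (ltnSn A) (fun c => eq_leq (nth_nil 0 c)).
rewrite !cats0 => ->.
rewrite (@nPT_col0 _ _ _ ord0) // (@nPT_col0 _ _ _ (@Ordinal A.+1 A (ltnSn A))) //.
  by rewrite add0n addn0.
by rewrite nth_nseq_cat ltnn subnn.
Qed.

Lemma PT_rec A j r :
  PT [:: A.+2, j.+1 & r] =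
  PT ((A + j).+2 :: r) + PT [:: A.+1, j.+1 & r] + PT [:: A.+1, j.+2 & r].
Proof.
rewrite /PT !colLens_cons /= !subn1 /= -!/(nPT _ _ _).
set k := (size r).+1; set cl := nseq j k ++ colLens r.
have Hcl c : nth 0 cl c <= k.
  rewrite /cl nth_nseq_cat; case: (c < j) => //.
  exact: leq_trans (colLens_le _ _) (leqnSn _).
rewrite (@nPT_rec k _ A cl) //; last by rewrite size_cat size_nseq ltnS leq_addr.
congr (_ + _ + _); congr nPT; rewrite /cl ?size_cat ?size_nseq /= ?size_cat ?size_nseq; try lia.
by rewrite catA -nseqD.
Qed.

Lemma Des_cons j J : J != [::] -> Des (j :: J) = j :: map (addn j) (Des J).
Proof.
case: J => [//|j' J] _; rewrite /Des /= -[2]/(1 + 1)%N iotaDl -map_comp /=.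
by rewrite addn0 -map_comp; congr (_ :: _); apply: eq_map => t /=; rewrite add1n.
Qed.

Lemma Des_addhead i j J : Des (i + j :: J) = map (addn i) (Des (j :: J)).
Proof.
case: J => [//|j' J]; rewrite (Des_cons (i + j)) // (Des_cons j) //=.
by rewrite -map_comp; congr (_ :: _); apply: eq_map => t /=; rewrite addnA.
Qed.

Lemma Des_gt0 J : all (fun j => 0 < j) J -> all (fun d => 0 < d) (Des J).
Proof.
case: J => [//|j J] /= /andP [Hj _]; apply/allP => d /mapP [t].
rewrite mem_iota => /andP [Ht _] ->; case: t Ht => //= t _.
by rewrite addn_gt0 Hj.
Qed.

Lemma Des_cons_ge i I d : d \in Des (i :: I) -> i <= d.
Proof.
case: I => [//|i' I]; rewrite Des_cons // inE => /orP [/eqP -> //|/mapP [x _ ->]].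
exact: leq_addr.
Qed.

Lemma coarser_addhead i I D : I != [::] -> all (fun d => 0 < d) D ->
  all (fun d => d \in Des (i :: I)) (map (addn i) D) = all (fun d => d \in Des I) D.
Proof.
move=> I0 D_gt0; rewrite all_map; apply: eq_in_all => x Dx /=.
have x_gt0 : 0 < x by move/allP: D_gt0 => /(_ x Dx).
rewrite Des_cons // inE (mem_map (@addnI i)) (_ : (i + x == i) = false) //.
by apply/negbTE; lia.
Qed.

Lemma coarser_cons_eq i I J : I != [::] -> J != [::] -> all (fun j => 0 < j) J ->
  coarser (i :: J) (i :: I) = coarser J I.
Proof.
move=> I0 J0 J_gt0; rewrite /coarser (Des_cons i J0) /= {1}(Des_cons i I0) mem_head /=.
exact: coarser_addhead (Des_gt0 J_gt0).
Qed.

Lemma coarser_cons_gt i j I J : I != [::] -> i < j -> all (fun j => 0 < j) J ->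
  coarser (j :: J) (i :: I) = coarser (j - i :: J) I.
Proof.
move=> I0 lt_ij J_gt0; rewrite /coarser -{1}(subnKC (ltnW lt_ij)) Des_addhead.
rewrite coarser_addhead //; apply: Des_gt0.
by rewrite /= J_gt0 andbT subn_gt0.
Qed.

Lemma coarser_cons_lt i j I J : j < i -> J != [::] -> coarser (j :: J) (i :: I) = false.
Proof.
move=> lt_ji J0; apply/negbTE; rewrite /coarser (Des_cons j J0) /=.
by apply/nandP; left; apply/negP => /Des_cons_ge; lia.
Qed.

Fixpoint coarsenings (I : seq nat) : seq (seq nat) :=
  if I is i :: I' then
    if I' is [::] then [:: [:: i]] else
    [seq i :: J | J <- coarsenings I'] ++
    [seq i + head 0 J :: behead J | J <- coarsenings I']
  else [:: [::]].

Lemma coarsenings_cons2 i i' I :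
  coarsenings [:: i, i' & I] =
  [seq i :: J | J <- coarsenings (i' :: I)] ++
  [seq i + head 0 J :: behead J | J <- coarsenings (i' :: I)].
Proof. by []. Qed.

Lemma mem_coarsenings1 i J : 0 < i ->
  (J \in coarsenings [:: i]) = is_composition (sumn [:: i]) J && coarser J [:: i].
Proof.
move=> i_gt0; rewrite inE /is_composition /=; case: J => [|x [|y J]] /=.
- by rewrite addn0; apply/esym/negbTE; lia.
- rewrite /coarser /Des /= !addn0 !andbT.
  by apply/eqP/andP => [[->]|[_ /eqP ->]] //; split.
- by rewrite /coarser /Des /= !andbF; case: eqP.
Qed.

Lemma mem_coarsenings I J : all (fun i => 0 < i) I ->
  (J \in coarsenings I) = is_composition (sumn I) J && coarser J I.
Proof.
rewrite /is_composition.
elim: I J => [|i I IH] J /=.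
  move=> _; rewrite inE; case: J => [|x J] //=.
  by apply/esym/negbTE/negP => /andP [/andP [/andP [x_gt0 _] /eqP]]; lia.
case: I IH => [|i' I] IH /andP [i_gt0 I_gt0]; first exact: mem_coarsenings1.
rewrite mem_cat.
have sumI_gt0 : 0 < sumn (i' :: I) by case/andP: I_gt0 => /= ? _; lia.
have head_gt0 J' : J' \in coarsenings (i' :: I) -> exists2 h, 0 < h & J' = h :: behead J'.
  rewrite IH // => /andP [/andP [J'_gt0 /eqP sumJ'] _].
  case: J' J'_gt0 sumJ' => [_ E|h t /andP [h_gt0 _] _]; last by exists h.
  by move: sumI_gt0; rewrite -E.
case: J => [|j J] /=.
  rewrite (_ : (0 == _) = false) ?andbF; last by apply/negbTE; lia.
  by apply/negbTE; rewrite negb_or; apply/andP; split; apply/mapP => -[].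
case: (ltngtP j i) => [lt_ji|lt_ij|->].
- rewrite (_ : _ \in _ = false); last by apply/negbTE/mapP => -[J' _ [E _]]; lia.
  rewrite (_ : _ \in _ = false); last by apply/negbTE/mapP => -[J' _ [E _]]; lia.
  case: J => [|x J]; last by rewrite coarser_cons_lt // andbF.
  by apply/esym/negbTE/negP => /andP [/andP [_ /eqP]]; rewrite addn0; lia.
- rewrite (_ : _ \in _ = false) /=; last by apply/negbTE/mapP => -[J' _ [E _]]; lia.
  have -> : (j :: J \in [seq i + head 0 J' :: behead J' | J' <- coarsenings (i' :: I)]) =
            (j - i :: J \in coarsenings (i' :: I)).
    apply/mapP/idP => [[J' /[dup] CJ' /head_gt0 [h _ E] [-> ->]]|CJ].
      by move: CJ'; rewrite E /= addKn.
    by exists (j - i :: J) => //=; rewrite subnKC // ltnW.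
  rewrite IH //= subn_gt0 lt_ij (ltn_trans i_gt0 lt_ij) /=.
  case J_gt0 : (all _ J) => //=; rewrite (coarser_cons_gt _ lt_ij) //.
  by congr (_ && _); apply/eqP/eqP; lia.
- rewrite (_ : _ \in [seq _ + _ :: _ | _ <- _] = false) ?orbF; last first.
    by apply/negbTE/mapP => -[J' /head_gt0 [h h_gt0 ->] /= [E _]]; lia.
  have cons_inj : injective (cons i) by move=> ? ? [].
  rewrite (mem_map cons_inj) IH //= i_gt0 eqn_add2l.
  case: J => [|x J]; first by rewrite /= eq_sym (negbTE (lt0n_neq0 sumI_gt0)) ?andbF.
  case J_gt0 : (all _ (x :: J)) => //=; congr (_ && _).
  by rewrite coarser_cons_eq // J_gt0.
Qed.

Lemma coarsenings_head I J : all (fun i => 0 < i) I -> I != [::] ->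
  J \in coarsenings I -> exists2 h, 0 < h & J = h :: behead J.
Proof.
move=> I_gt0 I0; rewrite mem_coarsenings // => /andP [/andP [J_gt0 /eqP sumJ] _].
case: J J_gt0 sumJ => [_|h t /andP [h_gt0 _] _]; last by exists h.
by case: I I_gt0 I0 => //= i I /andP [i_gt0 _] _; lia.
Qed.

Lemma size_coarsenings I J : J \in coarsenings I -> size J <= size I.
Proof.
elim: I J => [|i I IH] J /=; first by rewrite inE => /eqP ->.
case: I IH => [|i' I] IH; first by rewrite inE => /eqP ->.
rewrite mem_cat => /orP [] /mapP [J' /IH le_J'I ->] //=.
by case: J' le_J'I => //= h t /ltnW.
Qed.

Lemma uniq_coarsenings I : all (fun i => 0 < i) I -> uniq (coarsenings I).
Proof.
elim: I => [|i I IH] //=; case: I IH => [|i' I] IH // /andP [i_gt0 I_gt0].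
have cons_inj : injective (cons i) by move=> ? ? [].
rewrite cat_uniq (map_inj_uniq cons_inj) IH //=; apply/andP; split.
  apply/hasPn => J /mapP [J' CJ' ->]; apply/negP => /mapP [J2 _ [E _]].
  by have [h h_gt0 EJ'] := coarsenings_head I_gt0 isT CJ'; move: E; rewrite EJ' /=; lia.
rewrite map_inj_in_uniq ?IH // => J1 J2 CJ1 CJ2.
have [h1 _ ->] := coarsenings_head I_gt0 isT CJ1.
have [h2 _ ->] := coarsenings_head I_gt0 isT CJ2.
by move=> /= [E ->]; congr (_ :: _); lia.
Qed.

Lemma uniq_bseqs l b : uniq (bseqs l b).
Proof.
elim: l => [|l IH] //=; apply/andP; split.
  by apply/negP => /allpairsP [[x y] [_ _ /=]].
apply: allpairs_uniq => //; first exact: iota_uniq.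
by move=> [x y] [x' y'] _ _ /= [-> ->].
Qed.

Lemma mem_bseqs l b J : size J <= l -> all (fun x => 0 < x <= b) J -> J \in bseqs l b.
Proof.
elim: l J => [|l IH] [|x J] //= Hs /andP [Hx HJ]; rewrite inE /=.
apply/allpairsP; exists (x, J) => /=; split => //; last exact: IH.
by rewrite mem_iota; lia.
Qed.

Lemma composition_in_bseqs n J : is_composition n J -> J \in bseqs n n.
Proof.
case/andP => J_gt0 /eqP <-; apply: mem_bseqs.
  by elim: J J_gt0 => //= x J IH /andP [x_gt0 /IH]; lia.
apply/allP => x Jx; move/allP: J_gt0 => /(_ x Jx) -> /=.
by elim: J Jx => //= y J IH; rewrite inE => /orP [/eqP ->|/IH]; lia.
Qed.

Lemma Fact_cons x J : Fact (x :: J) = ((size J).+1 ^ x * Fact J)%N.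
Proof. by rewrite /Fact /= big_ord_recl /= subn0. Qed.

Local Open Scope ring_scope.

Lemma PoszX (a b : nat) : (a ^ b)%N%:Z = a%:Z ^+ b.
Proof. by rewrite -!natz natrX. Qed.

Definition shift_diff (i : nat) (g : nat -> int) (p : nat) : int :=
  p.+1%:Z ^+ i * g p.+1 - p%:Z ^+ i * g p.

Fixpoint iter_diff (I : seq nat) (g : nat -> int) : int :=
  if I is i :: I' then iter_diff I' (shift_diff i g) else g 0%N.

Lemma eq_iter_diff I g1 g2 : g1 =1 g2 -> iter_diff I g1 = iter_diff I g2.
Proof.
elim: I g1 g2 => [|i I IH] g1 g2 Eg /=; first exact: Eg.
by apply: IH => p; rewrite /shift_diff !Eg.
Qed.

Lemma iter_diffD I g1 g2 :
  iter_diff I (fun p => g1 p + g2 p) = iter_diff I g1 + iter_diff I g2.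
Proof.
elim: I g1 g2 => [|i I IH] g1 g2 //=.
by rewrite -IH; apply: eq_iter_diff => p; rewrite /shift_diff; ring.
Qed.

Lemma iter_diff1 i : (0 < i)%N -> iter_diff [:: i] (fun _ => 1) = 1.
Proof. by case: i => // i _; rewrite /= /shift_diff expr1n expr0n /= mulr1 mul0r subr0. Qed.

Lemma iter_diff_cons1 I : iter_diff (1%N :: I) (fun _ => 1) = iter_diff I (fun _ => 1).
Proof.
by rewrite /=; apply: eq_iter_diff => p; rewrite /shift_diff !expr1 !mulr1 -addn1 PoszD; ring.
Qed.

Lemma shift_diff_rec A j p :
  shift_diff j.+1 (shift_diff A.+2 (fun _ => 1)) p =
  shift_diff (A + j).+2 (fun _ => 1) p + shift_diff j.+1 (shift_diff A.+1 (fun _ => 1)) p +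
  shift_diff j.+2 (shift_diff A.+1 (fun _ => 1)) p.
Proof.
rewrite /shift_diff.
have -> : p.+2%:Z = p.+1%:Z + 1 by rewrite -addn1 PoszD.
have -> : p.+1%:Z = p%:Z + 1 by rewrite -addn1 PoszD.
by rewrite !(exprS, exprD); ring.
Qed.

Lemma iter_diff_rec A j r :
  iter_diff [:: A.+2, j.+1 & r] (fun _ => 1) =
  iter_diff ((A + j).+2 :: r) (fun _ => 1) + iter_diff [:: A.+1, j.+1 & r] (fun _ => 1) +
  iter_diff [:: A.+1, j.+2 & r] (fun _ => 1).
Proof. by rewrite /= -!iter_diffD; apply: eq_iter_diff => p; rewrite shift_diff_rec. Qed.

Lemma PT_iter_diff I : I != [::] -> all (fun i => 0 < i)%N I ->
  (PT I)%:Z = iter_diff I (fun _ => 1).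
Proof.
move: {2}(size I) (erefl (size I)) => n.
elim: n I => [|n IHn] [|i I] // [sizeI] _ /andP [i_gt0 I_gt0].
elim: i I sizeI i_gt0 I_gt0 => [//|[|A] IHi] I sizeI _ I_gt0.
  case: I sizeI I_gt0 => [|i2 r] sizeI I_gt0; first by rewrite PT1 iter_diff1.
  by rewrite PT_cons1 iter_diff_cons1 IHn.
case: I sizeI I_gt0 => [|[//|j] r] sizeI I_gt0.
  by rewrite PT_single (IHi [::]) // !iter_diff1.
rewrite PT_rec iter_diff_rec !PoszD (IHi [:: j.+1 & r]) ?(IHi [:: j.+2 & r]) //.
by rewrite (IHn ((A + j).+2 :: r)) //= (andP I_gt0).2.
Qed.

Lemma sum_coarsenings I (g : nat -> int) : all (fun i => 0 < i)%N I ->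
  \sum_(J <- coarsenings I) (-1) ^+ (size I - size J) * (Fact J)%:Z * g (size J) =
  iter_diff I g.
Proof.
elim: I g => [|i I IH] g; first by rewrite /= big_seq1 /Fact big_ord0 /= !mul1r.
case: I IH => [|i' I] IH /andP [i_gt0 I_gt0].
  rewrite big_seq1 /= Fact_cons /Fact big_ord0 muln1 subnn mul1r exp1n mul1r.
  by rewrite /shift_diff expr1n expr0n; case: i i_gt0 => //= i _; rewrite mul1r mul0r subr0.
rewrite (_ : iter_diff _ g = iter_diff (i' :: I) (shift_diff i g)) // -IH // coarsenings_cons2.
set C := coarsenings (i' :: I); rewrite big_cat /= !big_map -big_split /=.
apply: eq_big_seq => J CJ.
have [h _ EJ] := @coarsenings_head (i' :: I) J I_gt0 isT CJ.
move: (size_coarsenings CJ); rewrite EJ /= !Fact_cons !PoszM !PoszX /shift_diff.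
set t := size (behead J) => le_tI.
rewrite (_ : ((size I).+2 - t.+1 = (size I).+1 - t.+1 + 1)%N); last by lia.
by rewrite /= -/t subSS !exprD expr1; ring.
Qed.

Theorem mainTheorem2 (n : nat) (I : seq nat) :
  (1 <= n)%N -> is_composition n I ->
  (PT I)%:Z =
    \sum_(J <- bseqs n n | is_composition n J && coarser J I)
      (-1) ^+ (size I - size J) * (Fact J)%:Z.
Proof.
move=> n_gt0 /andP [I_gt0 /eqP sumI].
have I0 : I != [::] by apply: contraTneq n_gt0 => I0; rewrite -sumI I0.
rewrite PT_iter_diff // -(sum_coarsenings (fun=> 1) I_gt0) -[in RHS]big_filter.
under [LHS]eq_bigr do rewrite mulr1.
apply: perm_big; apply: uniq_perm; first exact: uniq_coarsenings.
  exact/filter_uniq/uniq_bseqs.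
move=> J; rewrite mem_filter mem_coarsenings // sumI.
by case compJ: (is_composition n J); rewrite // (composition_in_bseqs compJ) andbT.
Qed.
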